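(* Let $q$ be a prime power, $l\ge1$, $t=q^l$, $G_4(x)=x^t+x^{t-1}+1$, $G_5(x)=x^{t+1}+x^t+x$, and $L_4^*=\{\alpha\in GF(t^2):\ \alpha\neq0,\ G_4(\alpha)\ne0\}$. Then the $q$-ary Goppa codes $\Gamma_5^{(q-1)}=\Gamma(L_4^*,G_5^{q-1})$ and $\Gamma_4^{*(q-1)}=\Gamma(L_4^*,G_4^{q-1})$ have equal parity-check matrices, i.e., they coincide as codes.
   Context: For a set $L=\{\alpha_1,\dots,\alpha_n\}$ of distinct elements of $GF(t^2)$ and $P\in GF(t^2)[x]$ with $P(\alpha_k)\neq0$ for all $k$, the $q$-ary Goppa code is $\Gamma(L,P)=\{c\in GF(q)^n:\ \sum_k c_k\alpha_k^s/P(\alpha_k)=0 \text{ for } s=0,\dots,\deg P-1\}$. *)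

From HB Require Import structures.
From mathcomp Require Import all_boot all_order all_algebra all_field.
Set Implicit Arguments. Unset Strict Implicit. Unset Printing Implicit Defensive.
Import GRing.Theory.
Local Open Scope ring_scope.

(* GF(q) is the finite field K, GF(t^2) is the finite field L, and the
   embedding GF(q) \subset GF(t^2) is the field morphism f. *)

Definition goppa (K L : finFieldType) (f : {rmorphism K -> L}) (n : nat)
    (alpha : 'I_n -> L) (P : {poly L}) : {set 'rV[K]_n} :=
  [set c : 'rV[K]_n | [forall s : 'I_(size P).-1,
     \sum_(k < n) f (c 0 k) * alpha k ^+ s / P.[alpha k] == 0]].

Definition G4 (L : finFieldType) (t : nat) : {poly L} := 'X^t + 'X^(t.-1) + 1.
Definition G5 (L : finFieldType) (t : nat) : {poly L} := 'X^(t.+1) + 'X^t + 'X.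

Definition L4star (L : finFieldType) (t : nat) : {set L} :=
  [set a : L | (a != 0) && ((G4 L t).[a] != 0)].

From HB Require Import structures.
From mathcomp Require Import all_boot all_order all_algebra all_field.
From mathcomp Require Import ring zify.
Set Implicit Arguments. Unset Strict Implicit. Unset Printing Implicit Defensive.
Import GRing.Theory.
Local Open Scope ring_scope.

(* Since G5 = X G4, the Gamma5 equations are the Gamma4 equations shifted by
   q - 1 in the exponent, together with the "negative" ones
   sum_k c_k alpha_k^-d / G4(alpha_k)^(q-1) = 0 for 0 < d < q; everything
   reduces to deriving these from Gamma4.  Modulo G4 the variable X is a q-th
   power, so alpha^e = P(alpha)^q + Q(alpha) G4(alpha) with deg P < t and
   deg Q < t(q-1) whenever e < tq; as c_k^q = c_k, the Gamma4 equations give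
   sum_k c_k alpha_k^e / G4(alpha_k)^q = 0 for all e < tq.  Finally
   alpha G4(alpha) = G5(alpha) lies in GF(t), so taking t-th powers turns
   alpha^e / G4(alpha)^q into 1 / (alpha^d G4(alpha)^q) for a suitable e < tq,
   and 1 / (alpha^d G4^(q-1)) = G4 / (alpha^d G4^q) splits into such terms. *)

Lemma dvdp_subXX (R : idomainType) (d p r : {poly R}) k :
  d %| p - r -> d %| p ^+ k - r ^+ k.
Proof. by move=> dvd_d; rewrite subrXX dvdp_mulr. Qed.

Lemma monomial_qth_power_mod (F : fieldType) (G r : {poly F}) q e :
  G != 0 -> G %| r ^+ q - 'X ->
  exists2 P : {poly F}, (size P < size G)%N & G %| 'X^e - P ^+ q.
Proof.
move=> G_neq0 r_root; set P0 := 'X^(e %/ q) * r ^+ (e %% q).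
exists (P0 %% G); first exact: ltn_modpN0.
have dvd_P0 : G %| 'X^e - P0 ^+ q.
  rewrite {1}(divn_eq e q) exprD exprMn -!exprM mulnC -mulrBr.
  by rewrite dvdp_mull // -opprB dvdpNr mulnC exprM dvdp_subXX.
have -> : 'X^e - (P0 %% G) ^+ q = ('X^e - P0 ^+ q) + (P0 ^+ q - (P0 %% G) ^+ q).
  by rewrite addrA subrK.
rewrite dvdp_add // dvdp_subXX //.
by rewrite {1}(divp_eq P0 G) addrK dvdp_mull.
Qed.

Lemma size_G4 (F : finFieldType) t : (0 < t)%N -> size (G4 F t) = t.+1.
Proof. by move=> t_gt0; rewrite !size_polyDl ?size_polyXn ?size_poly1 // ltnS prednK. Qed.

Lemma size_G5 (F : finFieldType) t : (0 < t)%N -> size (G5 F t) = t.+2.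
Proof. by move=> t_gt0; rewrite !size_polyDl ?size_polyXn ?size_polyX. Qed.

Section G4Reduction.
Variables (F : finFieldType) (q t : nat).
Hypotheses (t_pchar : [pchar F].-nat t) (q_dvd_t : (q %| t)%N).

Let t_gt0 : (0 < t)%N. Proof. by case/andP: t_pchar. Qed.

Lemma X_qth_power_mod_G4 : G4 F t %| (- ('X^(t.-1) + 1)) ^+ (t %/ q) ^+ q - 'X.
Proof.
have t_pchar_poly : [pchar {poly F}].-nat t by rewrite (eq_pnat _ (@pchar_poly F)).
set G := G4 F t; set v : {poly F} := 'X^(t.-1 * t).
have XG : 'X^t = 'X * 'X^(t.-1) :> {poly F} by rewrite -exprS prednK.
have Gt : G ^+ t = v * 'X^t + v + 1.
  by rewrite !exprDn_pchar // expr1n -!exprM -exprD -mulSnr prednK.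
(* Mod G we have G^t = 0 and X^(t-1) (X + 1) = -1, which force v = -(X + 1). *)
have v_mod : v + 'X + 1 = G * (v - ('X + 1) * (v - G ^+ t.-1)).
  have -> : G * (v - ('X + 1) * (v - G ^+ t.-1)) =
            G * v - ('X + 1) * v * G + ('X + 1) * G ^+ t.
    by rewrite -[in RHS](prednK t_gt0) exprS; ring.
  by rewrite Gt /G /G4 XG; ring.
rewrite -exprM divnK // exprNn_pchar // exprDn_pchar // expr1n -exprM -/v.
have -> : - (v + 1) - 'X = - (v + 'X + 1) by ring.
by rewrite v_mod dvdpNr dvdp_mulIl.
Qed.

Lemma monomial_G4_decomp e : (e < t * q)%N -> exists P Q : {poly F},
  [/\ (size P <= t)%N, (size Q <= t * q.-1)%N & 'X^e = P ^+ q + Q * G4 F t].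
Proof.
move=> lt_e_tq; have q_gt0 : (0 < q)%N by rewrite (dvdn_gt0 t_gt0).
have sizeG := size_G4 F t_gt0; have G_neq0 : G4 F t != 0 by rewrite -size_poly_eq0 sizeG.
have [P] := monomial_qth_power_mod e G_neq0 X_qth_power_mod_G4.
rewrite sizeG ltnS => sizeP /dvdpP[Q XeE]; exists P, Q; split=> //; last first.
  by rewrite -XeE addrC subrK.
have [-> | Q_neq0] := eqVneq Q 0; first by rewrite size_poly0.
have size_Pq : (size (P ^+ q) <= t * q)%N.
  apply: leq_trans (size_poly_exp_leq P q) _; nia.
have : (size ('X^e - P ^+ q)%R <= t * q)%N.
  by rewrite (leq_trans (size_polyD _ _)) // size_polyN geq_max size_polyXn lt_e_tq.
rewrite XeE (size_mul Q_neq0 G_neq0) sizeG addnS /= -subn1 mulnBr muln1.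
move: (size Q) => sQ; lia.
Qed.
End G4Reduction.

Definition wsum (R : comNzRingType) n (beta alpha : 'I_n -> R) (h : R -> R) : R :=
  \sum_(k < n) beta k * h (alpha k).

Section WeightedSum.
Variables (R : comNzRingType) (n : nat) (beta alpha : 'I_n -> R).
Local Notation S := (wsum beta alpha).

Lemma eq_wsum h h' : (forall k, h (alpha k) = h' (alpha k)) -> S h = S h'.
Proof. by move=> eq_h; apply: eq_bigr => k _; rewrite eq_h. Qed.

Lemma wsumD h h' : S (fun a => h a + h' a) = S h + S h'.
Proof. by rewrite -big_split; apply: eq_bigr => k _; rewrite mulrDr. Qed.

Lemma wsum_horner (P : {poly R}) h :
  S (fun a => P.[a] * h a) = \sum_(i < size P) P`_i * S (fun a => a ^+ i * h a).
Proof.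
rewrite /wsum; under eq_bigr do rewrite horner_coef mulr_suml mulr_sumr.
rewrite exchange_big; apply: eq_bigr => i _; rewrite mulr_sumr.
by apply: eq_bigr => k _; ring.
Qed.

Lemma wsumXn_pchar N h : [pchar R].-nat N -> (forall k, beta k ^+ N = beta k) ->
  S h ^+ N = S (fun a => h a ^+ N).
Proof.
move=> N_pchar beta_N; rewrite (big_morph (fun x : R => x ^+ N) (id1 := 0) (op1 := +%R)).
- by apply: eq_bigr => k _; rewrite exprMn beta_N.
- by move=> x y; rewrite exprDn_pchar.
- by rewrite expr0n gtn_eqF //; case/andP: N_pchar.
Qed.
End WeightedSum.

Lemma wsum_cancelXn (F : fieldType) n (beta alpha : 'I_n -> F) (h : F -> F) s m :
  (forall k, alpha k != 0) ->
  wsum beta alpha (fun a => a ^+ (s + m) / (a * h a) ^+ m) =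
  wsum beta alpha (fun a => a ^+ s / h a ^+ m).
Proof.
move=> alpha_neq0; apply: eq_wsum => k.
by rewrite exprD exprMn invfM mulrACA mulrA divfK ?expf_neq0.
Qed.

Lemma horner_G5 (F : finFieldType) t (a : F) :
  (0 < t)%N -> (G5 F t).[a] = a * (G4 F t).[a].
Proof. by move=> t_gt0; rewrite !hornerE !mulrDr mulr1 -!exprS prednK. Qed.

Lemma horner_G5_frobenius (F : finFieldType) t (a : F) :
  [pchar F].-nat t -> #|F| = (t ^ 2)%N -> (G5 F t).[a] ^+ t = (G5 F t).[a].
Proof.
move=> t_pchar card_F; have a_tt : a ^+ (t * t) = a by rewrite mulnn -card_F expf_card.
by rewrite !hornerE !exprDn_pchar // -!exprM mulSn exprD a_tt exprSr; ring.
Qed.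

Section Gamma4Sums.
Variables (L : finFieldType) (q l t n : nat) (alpha beta : 'I_n -> L).
Hypotheses (q_pchar : [pchar L].-nat q) (q_gt1 : (1 < q)%N).
Hypotheses (l_gt0 : (0 < l)%N) (t_def : t = (q ^ l)%N).
Hypotheses (beta_q : forall k, beta k ^+ q = beta k).
Hypotheses (alpha_neq0 : forall k, alpha k != 0).
Hypotheses (G4_alpha_neq0 : forall k, (G4 L t).[alpha k] != 0).

Local Notation g a := (G4 L t).[a].
Local Notation S := (wsum beta alpha).

Hypothesis gamma4 : forall s, (s < t * q.-1)%N -> S (fun a => a ^+ s / g a ^+ q.-1) = 0.

Let t_pchar : [pchar L].-nat t. Proof. by rewrite t_def pnatX q_pchar. Qed.
Let q_dvd_t : (q %| t)%N. Proof. by rewrite t_def dvdn_exp. Qed.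
Let t_gt0 : (0 < t)%N. Proof. by case/andP: t_pchar. Qed.
Let q1_gt0 : (0 < q.-1)%N. Proof. by rewrite -ltnS prednK // ltnW. Qed.
Let q_le_t : (q <= t)%N. Proof. by rewrite dvdn_leq // t_def expn_gt0 ltnW. Qed.

Lemma wsum_poly_G4 (P : {poly L}) :
  (size P <= t * q.-1)%N -> S (fun a => P.[a] / g a ^+ q.-1) = 0.
Proof.
move=> sizeP; rewrite (wsum_horner _ _ P (fun a => (g a ^+ q.-1)^-1)).
by apply: big1 => i _; rewrite gamma4 ?mulr0 // (leq_trans (ltn_ord i)).
Qed.

Lemma wsum_Xn_G4q e : (e < t * q)%N -> S (fun a => a ^+ e / g a ^+ q) = 0.
Proof.
move=> lt_e_tq.
have [P [Q [sizeP sizeQ XeE]]] := monomial_G4_decomp t_pchar q_dvd_t lt_e_tq.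
have gq k : g (alpha k) ^+ q = g (alpha k) ^+ q.-1 * g (alpha k).
  by rewrite -exprSr prednK // ltnW.
have -> : S (fun a => a ^+ e / g a ^+ q) =
          S (fun a => (P.[a] / g a) ^+ q) + S (fun a => Q.[a] / g a ^+ q.-1).
  rewrite -wsumD; apply: eq_wsum => k.
  rewrite -[alpha k ^+ e]hornerXn XeE hornerD hornerM horner_exp expr_div_n gq; field.
  by rewrite G4_alpha_neq0 expf_neq0.
rewrite wsum_poly_G4 // addr0 -wsumXn_pchar //.
have -> : S (fun a => P.[a] / g a) = S (fun a => (P * G4 L t ^+ q.-2).[a] / g a ^+ q.-1).
  apply: eq_wsum => k; have gk := G4_alpha_neq0 k.
  rewrite hornerM horner_exp -[in RHS](prednK q1_gt0) exprS /=.
  by rewrite invfM [_^-1 * _]mulrC mulrA mulfK ?expf_neq0.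
rewrite wsum_poly_G4; first by rewrite expr0n gtn_eqF // ltnW.
apply: leq_trans (size_polyMleq _ _) _.
have := size_poly_exp_leq (G4 L t) q.-2; rewrite size_G4 //= => size_Gq.
have -> : (t * q.-1 = t * q.-2 + t)%N by rewrite -mulnSr prednK.
move: (size P) (size _) sizeP size_Gq => sP sG; lia.
Qed.

Hypothesis card_L : #|L| = (t ^ 2)%N.

Lemma inv_XnG4_decomp (a : L) d : a != 0 -> g a != 0 -> (0 < d < q)%N ->
  (a ^+ d * g a ^+ q.-1)^-1 =
  a ^+ (t - d) / g a ^+ q + a ^+ (t.-1 - d) / g a ^+ q +
  (a ^+ (t * (q - d) - q) / g a ^+ q) ^+ t.
Proof.
move=> a_neq0 ga_neq0 /andP[d_gt0 d_lt_q]; set e := (t * (q - d) - q)%N.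
have aq : a ^+ q = a ^+ (q - d) * a ^+ d by rewrite -exprD subnK // ltnW.
have frob_e : (a ^+ e / g a ^+ q) ^+ t = (a ^+ d * g a ^+ q)^-1.
  have a_tt : a ^+ (t * t) = a by rewrite mulnn -card_L expf_card.
  have a_et : a ^+ e ^+ t * a ^+ t ^+ q = a ^+ (q - d).
    rewrite -!exprM -exprD.
    have -> : (e * t + t * q = t * t * (q - d))%N.
      rewrite [(t * q)%N]mulnC -mulnDl subnK; first by rewrite mulnAC.
      by rewrite -[q in (q <= _)%N]muln1 leq_mul // subn_gt0.
    by rewrite exprM a_tt.
  have g_t : g a ^+ t = a * g a / a ^+ t.
    rewrite -horner_G5 // -horner_G5_frobenius // horner_G5 // exprMn.
    by rewrite [a ^+ t * _]mulrC mulfK ?expf_neq0.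
  rewrite expr_div_n -!exprM [(q * t)%N]mulnC !exprM g_t expr_div_n exprMn aq.
  move: (expf_neq0 (q - d) a_neq0) (expf_neq0 d a_neq0) (expf_neq0 q ga_neq0) a_et.
  move: (expf_neq0 q (expf_neq0 t a_neq0)).
  move: (a ^+ t ^+ q) (a ^+ e ^+ t) (a ^+ (q - d)) (a ^+ d) (g a ^+ q).
  move=> A X Y D G A0 Y0 D0 G0 XA.
  rewrite -(mulfK A0 X) XA; field.
  by rewrite A0 Y0 D0 G0.
have g_split : g a = a ^+ (t - d) * a ^+ d + a ^+ (t.-1 - d) * a ^+ d + 1.
  by rewrite !hornerE -!exprD !subnK //; lia.
have gq : g a ^+ q = g a ^+ q.-1 * g a by rewrite -exprSr prednK // ltnW.
have [D0 Z0] := (expf_neq0 d a_neq0, expf_neq0 q.-1 ga_neq0).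
rewrite frob_e gq; move: g_split D0 Z0 ga_neq0.
move: (g a) (g a ^+ q.-1) (a ^+ (t - d)) (a ^+ (t.-1 - d)) (a ^+ d) => z Z u v D -> D0 Z0 z0.
by field; rewrite D0 Z0 z0.
Qed.

Lemma wsum_invXnG4 d : (0 < d < q)%N -> S (fun a => (a ^+ d * g a ^+ q.-1)^-1) = 0.
Proof.
move=> d_range; have /andP[d_gt0 d_lt_q] := d_range.
have beta_t k : beta k ^+ t = beta k.
  by rewrite t_def; elim: (l) => [|j IHj]; rewrite ?expr1 // expnSr exprM IHj.
have -> : S (fun a => (a ^+ d * g a ^+ q.-1)^-1) =
    S (fun a => a ^+ (t - d) / g a ^+ q + a ^+ (t.-1 - d) / g a ^+ q +
                (a ^+ (t * (q - d) - q) / g a ^+ q) ^+ t).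
  by apply: eq_wsum => k; rewrite inv_XnG4_decomp.
have t_le_tq : (t <= t * q)%N by rewrite leq_pmulr // ltnW.
have tqd_le_tq : (t * (q - d) <= t * q)%N by rewrite leq_mul2l leq_subr orbT.
rewrite !wsumD -wsumXn_pchar // !wsum_Xn_G4q ?expr0n ?gtn_eqF ?add0r //; lia.
Qed.

Lemma wsum_G5_of_G4 s :
  (s < t.+1 * q.-1)%N -> S (fun a => a ^+ s / (a * g a) ^+ q.-1) = 0.
Proof.
move=> lt_s; have [lt_s_q1 | le_q1_s] := ltnP s q.-1.
  rewrite -(wsum_invXnG4 (d := q.-1 - s)); last by apply/andP; split; lia.
  apply: eq_wsum => k; have [a0 g0] := (alpha_neq0 k, G4_alpha_neq0 k).
  have aq : alpha k ^+ q.-1 = alpha k ^+ (q.-1 - s) * alpha k ^+ s.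
    by rewrite -exprD subnK // ltnW.
  rewrite exprMn aq.
  move: (expf_neq0 s a0) (expf_neq0 (q.-1 - s) a0) (expf_neq0 q.-1 g0).
  move: (alpha k ^+ s) (alpha k ^+ (q.-1 - s)) (g (alpha k) ^+ q.-1) => A D G A0 D0 G0.
  by field; rewrite A0 D0 G0.
rewrite -(subnK le_q1_s) wsum_cancelXn // gamma4 //.
by move: lt_s; rewrite mulSn; lia.
Qed.
End Gamma4Sums.

Lemma pchar_nat_card (K L : finFieldType) (f : {rmorphism K -> L}) p k :
  prime p -> #|K| = (p ^ k)%N -> [pchar L].-nat #|K|.
Proof.
move=> p_prime card_K; have pK := card_finPcharP card_K p_prime.
have pL : p \in [pchar L] by rewrite (fmorph_pchar f).
by rewrite card_K (eq_pnat _ (pcharf_eq pL)) pnatX pnat_id.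
Qed.

Lemma goppaP (K L : finFieldType) (f : {rmorphism K -> L}) n (alpha : 'I_n -> L)
    (P : {poly L}) (c : 'rV[K]_n) :
  reflect (forall s, (s < (size P).-1)%N ->
             wsum (fun k => f (c 0 k)) alpha (fun a => a ^+ s / P.[a]) = 0)
          (c \in goppa f alpha P).
Proof.
have sumE s : \sum_(k < n) f (c 0 k) * alpha k ^+ s / P.[alpha k] =
              wsum (fun k => f (c 0 k)) alpha (fun a => a ^+ s / P.[a]).
  by apply: eq_bigr => k _; rewrite mulrA.
rewrite inE; apply: (iffP forallP) => [gamma s lt_s | gamma s].
  by rewrite -sumE; apply/eqP/(gamma (Ordinal lt_s)).
by rewrite sumE gamma.
Qed.

Theorem lemma7 (K L : finFieldType) (f : {rmorphism K -> L}) (q l t : nat)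
  (Hq : exists p k : nat, [/\ prime p, (0 < k)%N & q = p ^ k]%N)
  (HK : #|K| = q) (Hl : (1 <= l)%N) (Ht : t = (q ^ l)%N) (HL : #|L| = (t ^ 2)%N)
  (n : nat) (alpha : 'I_n -> L) (Hinj : injective alpha)
  (Hsupp : forall a : L, a \in L4star L t <-> exists k : 'I_n, alpha k = a) :
  goppa f alpha (G5 L t ^+ q.-1) = goppa f alpha (G4 L t ^+ q.-1).
Proof.
have [p [k [p_prime _ q_def]]] := Hq.
have q_pchar : [pchar L].-nat q by rewrite -HK (pchar_nat_card f p_prime (etrans HK q_def)).
have q_gt1 : (1 < q)%N by rewrite -HK finNzRing_gt1.
have t_gt0 : (0 < t)%N by rewrite Ht expn_gt0 ltnW.
have alpha_L4 j : alpha j \in L4star L t by apply/Hsupp; exists j.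
have alpha_neq0 j : alpha j != 0 by have := alpha_L4 j; rewrite inE => /andP[].
have G4_alpha_neq0 j : (G4 L t).[alpha j] != 0 by have := alpha_L4 j; rewrite inE => /andP[].
apply/setP => c; set beta := fun k => f (c 0 k).
have beta_q j : beta j ^+ q = beta j by rewrite -rmorphXn -HK expf_card.
have G5E s : wsum beta alpha (fun a => a ^+ s / (G5 L t ^+ q.-1).[a]) =
             wsum beta alpha (fun a => a ^+ s / (a * (G4 L t).[a]) ^+ q.-1).
  by apply: eq_wsum => j; rewrite horner_exp horner_G5.
have G4E s : wsum beta alpha (fun a => a ^+ s / (G4 L t ^+ q.-1).[a]) =
             wsum beta alpha (fun a => a ^+ s / (G4 L t).[a] ^+ q.-1).
  by apply: eq_wsum => j; rewrite horner_exp.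
apply/goppaP/goppaP; rewrite -/beta !size_exp size_G4 ?size_G5 //= => gamma s lt_s.
  by rewrite G4E -(wsum_cancelXn _ _ _ _ alpha_neq0) -G5E gamma // mulSn addnC ltn_add2l.
rewrite G5E (wsum_G5_of_G4 q_pchar q_gt1 Hl Ht beta_q alpha_neq0 G4_alpha_neq0) //.
by move=> s' lt_s'; rewrite -G4E; apply: gamma.
Qed.
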